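(* Let $G$ be a graph and let $S$ be the set of simplicial vertices of $G$. Then $S$ is a general position set of $G$.
   Context: All graphs are finite, simple and connected. A vertex is simplicial if its neighbors induce a complete subgraph. A set $S$ of vertices is a general position set of $G$ if no three vertices of $S$ lie on a common geodesic (shortest path) of $G$. *)

From mathcomp Require Import all_boot.
Set Implicit Arguments. Unset Strict Implicit. Unset Printing Implicit Defensive.

Definition simple_graph (T : finType) (e : rel T) : Prop :=
  symmetric e /\ irreflexive e.

Definition connected_graph (T : finType) (e : rel T) : Prop :=
  forall x y : T, connect e x y.

(* A walk starting at x is the vertex sequence x :: p with path e x p;
   its length is size p.  It is a geodesic (shortest path) if no walk
   with the same endpoints is shorter. *)
Definition geodesic (T : finType) (e : rel T) (x : T) (p : seq T) : Prop :=
  path e x p /\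
  forall q : seq T, path e x q -> last x q = last x p -> size p <= size q.

Definition simplicial (T : finType) (e : rel T) (v : T) : bool :=
  [forall x, forall y, (e v x && e v y && (x != y)) ==> e x y].

Definition simplicial_set (T : finType) (e : rel T) : {set T} :=
  [set v | simplicial e v].

Definition general_position (T : finType) (e : rel T) (S : {set T}) : Prop :=
  forall (x : T) (p : seq T) (a b c : T),
    geodesic e x p ->
    a \in S -> b \in S -> c \in S ->
    a != b -> b != c -> a != c ->
    a \in x :: p -> b \in x :: p -> c \in x :: p -> False.

From mathcomp Require Import all_boot.
From mathcomp Require Import zify.

Set Implicit Arguments.
Unset Strict Implicit.
Unset Printing Implicit Defensive.

(* If a simplicial vertex v were an interior vertex ... u v w ... of a
   geodesic, its neighbours u and w would be equal or adjacent, and the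
   geodesic could be shortened by cutting out v (and possibly w).  So the
   only simplicial vertices on a geodesic are its two endpoints, and no three
   distinct ones fit. *)

Section SimplicialGeodesic.

Variables (T : finType) (e : rel T).

Lemma geodesic_interior_neighbours (x : T) p1 v w p2 :
  geodesic e x (p1 ++ v :: w :: p2) ->
  (last x p1 != w) && ~~ e (last x p1) w.
Proof.
move=> [+ shortest]; rewrite cat_path /= => /and4P[path_p1 _ _ path_p2].
apply/andP; split.
- apply/eqP => eq_uw.
  have := shortest (p1 ++ p2).
  rewrite cat_path path_p1 eq_uw path_p2 !last_cat /= eq_uw => /(_ isT erefl).
  by rewrite !size_cat /=; lia.
- apply/negP => e_uw.
  have := shortest (p1 ++ w :: p2).
  rewrite cat_path /= path_p1 e_uw path_p2 !last_cat /= => /(_ isT erefl).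
  by rewrite !size_cat /=; lia.
Qed.

Hypothesis e_sym : symmetric e.

Lemma simplicial_geodesic_endpoint (x : T) p v :
  geodesic e x p -> simplicial e v -> v \in x :: p -> v = x \/ v = last x p.
Proof.
move=> geo simp; rewrite in_cons => /orP[/eqP-> | v_in_p]; first by left.
right; move: geo; case/splitPr: v_in_p => p1 [|w p2] geo.
  by rewrite last_cat.
have [+ _] := geo; rewrite cat_path /= => /and4P[_ e_uv e_vw _].
move: geo => /geodesic_interior_neighbours /andP[neq_uw /negP[]].
by move/forallP: simp => /(_ (last x p1)) /forallP /(_ w) /implyP; apply;
  rewrite e_sym e_uv e_vw neq_uw.
Qed.

End SimplicialGeodesic.

Theorem lemma3p5 (T : finType) (e : rel T) :
  simple_graph e -> connected_graph e ->
  general_position e (simplicial_set e).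
Proof.
move=> [e_sym _] _ x p a b c geo sa sb sc ab bc ac ain bin cin.
rewrite !inE in sa sb sc.
have := simplicial_geodesic_endpoint e_sym geo sa ain.
have := simplicial_geodesic_endpoint e_sym geo sb bin.
have := simplicial_geodesic_endpoint e_sym geo sc cin.
by case=> ? [] ? [] ?; subst; rewrite ?eqxx in ab bc ac.
Qed.
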